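(* Let $\alpha>0$, $\nu:=\nu(\alpha)$, and let $(a_n)_{n\ge1}$ be a sequence of positive reals. Define $(\chi_t)_{t\ge1}$ inductively by $$\chi_t:=\max\Big\{a_t,\ \tfrac{t-1}{\alpha}\chi_1,\ \tfrac{t-2}{\alpha}\chi_2,\ \dots,\ \tfrac1\alpha\chi_{t-1}\Big\}$$ (so $\chi_1=a_1$). If $\lim_{n\to\infty}a_ne^{-\nu n}=0$, then there are constants $0<c'\le c<\infty$ such that $c'e^{\nu t}\le\chi_t\le ce^{\nu t}$ for all $t\ge1$; consequently $\lim_{t\to\infty}\frac{\log\chi_t}{t}=\nu$.
   Context: For $\alpha>0$, let $T=T(\alpha)\in\mathbb N$ be the unique positive integer with $\frac{(T-1)^T}{T^{T-1}}<\alpha\le\frac{T^{T+1}}{(T+1)^T}$, and define $\nu(\alpha):=\frac1T\log\frac T\alpha$. *)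

From Stdlib Require Import Reals Lra Lia List ClassicalEpsilon.
From Coquelicot Require Import Coquelicot.
Import ListNotations.
Open Scope R_scope.

Definition is_T (alpha : R) (T : nat) : Prop :=
  (1 <= T)%nat /\
  (INR T - 1) ^ T / INR T ^ (T - 1) < alpha /\
  alpha <= INR T ^ (T + 1) / (INR T + 1) ^ T.

Definition T_of (alpha : R) : nat := epsilon (inhabits 1%nat) (is_T alpha).

Definition nu (alpha : R) : R :=
  / INR (T_of alpha) * ln (INR (T_of alpha) / alpha).

(* chis a alpha n = [chi_1; ...; chi_n], where
   chi_t = max { a_t, (t-1)/alpha chi_1, ..., 1/alpha chi_(t-1) }. *)
Fixpoint chis (a : nat -> R) (alpha : R) (n : nat) : list R :=
  match n with
  | O => []
  | S m =>
      let l := chis a alpha m in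
      l ++ [fold_right Rmax (a (S m))
              (map (fun k => INR (S m - k) / alpha * nth (k - 1) l 0) (seq 1 m))]
  end.

(* chi_t for t >= 1 (index 0 is meaningless). *)
Definition chi (a : nat -> R) (alpha : R) (t : nat) : R :=
  nth (t - 1) (chis a alpha t) 0.

(* Put x := e^nu with nu = nu(alpha), T = T(alpha).  Then alpha x^T = T, and the two
   inequalities defining T say exactly that the sequence m |-> alpha x^m - m increases
   from m = T on ((T+1) <= T x) and decreases up to m = T ((T-1) x <= T).  Hence
   m/alpha <= x^m for every m >= 1, with equality at m = T (key_ineq).

   Upper bound: if a_n <= c x^n for all n, then by strong induction every candidate
   (t-k)/alpha chi_k of the maximum is <= x^(t-k) c x^k = c x^t, so chi_t <= c x^t.
   Lower bound: for t > T the candidate T/alpha chi_(t-T) = x^T chi_(t-T) reproduces the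
   geometric growth, so a lower bound c' x^n for n <= T propagates to all t.
   The hypothesis a_n e^(-nu n) -> 0 gives the constant c, positivity of a_1..a_T gives c',
   and the two-sided geometric bound gives (log chi_t)/t -> nu. *)

From Stdlib Require Import Reals Lra Lia List ClassicalEpsilon Wf_nat.
From Coquelicot Require Import Coquelicot.
Import ListNotations.
Open Scope R_scope.

Lemma exp_mul_INR (y : R) (n : nat) : exp (y * INR n) = exp y ^ n.
Proof.
  induction n as [|n IH].
  - simpl. rewrite Rmult_0_r, exp_0. reflexivity.
  - rewrite S_INR, Rmult_plus_distr_l, exp_plus, IH, Rmult_1_r. simpl. ring.
Qed.

Lemma pow_lt_compat_l (a b : R) (n : nat) : 0 <= a < b -> (1 <= n)%nat -> a ^ n < b ^ n.
Proof.
  intros [Ha Hab] Hn. induction n as [|n IH]; [lia|].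
  destruct n as [|n].
  - simpl. lra.
  - assert (IH' : a ^ S n < b ^ S n) by (apply IH; lia).
    assert (0 < b ^ S n) by (apply pow_lt; lra).
    assert (0 <= a ^ S n) by (apply pow_le; lra).
    change (a * a ^ S n < b * b ^ S n). nra.
Qed.

(** * Existence of T(alpha) *)

(* Right end  n^(n+1)/(n+1)^n  of the interval of alphas with T(alpha) = n;
   the left end for n+1 is the same number. *)
Definition T_upper (n : nat) : R := INR n ^ (n + 1) / (INR n + 1) ^ n.

(* T_upper n >= n/3, since (1 + 1/n)^n <= e <= 3; so the intervals exhaust (0, +oo). *)
Lemma T_upper_ge (n : nat) : (1 <= n)%nat -> INR n / 3 <= T_upper n.
Proof.
  intros Hn. set (r := INR n).
  assert (Hr : 0 < r) by (apply lt_0_INR; lia).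
  assert (Hrn : 0 < r ^ n) by (apply pow_lt; lra).
  assert (Hsucc : (r + 1) ^ n <= 3 * r ^ n).
  { replace (r + 1) with (r * (1 + / r)) by (field; lra).
    rewrite Rpow_mult_distr.
    assert (Hexp : (1 + / r) ^ n <= exp (/ r) ^ n).
    { apply pow_incr. split.
      - assert (0 < / r) by (apply Rinv_0_lt_compat; lra). lra.
      - left. apply exp_ineq1. apply Rgt_not_eq, Rinv_0_lt_compat; lra. }
    rewrite <- exp_mul_INR in Hexp. fold r in Hexp.
    replace (/ r * r) with 1 in Hexp by (field; lra).
    pose proof exp_le_3. nra. }
  assert (0 < (r + 1) ^ n) by (apply pow_lt; lra).
  unfold T_upper. fold r. rewrite pow_add, pow_1. unfold Rdiv.
  apply Rle_trans with (r ^ n * r * / (3 * r ^ n)).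
  - right. field. lra.
  - apply Rmult_le_compat_l; [nra|]. apply Rinv_le_contravar; lra.
Qed.

(* The smallest n with alpha <= T_upper n satisfies the defining condition of T(alpha). *)
Lemma exists_T (alpha : R) : 0 < alpha -> exists T, is_T alpha T.
Proof.
  intros Ha.
  assert (HN : exists N, alpha <= T_upper N).
  { pose proof is_lim_seq_INR as H. apply is_lim_seq_spec in H.
    destruct (H (3 * alpha)) as [N HN].
    exists (Nat.max N 1). pose proof (HN (Nat.max N 1) ltac:(lia)).
    pose proof (T_upper_ge (Nat.max N 1) ltac:(lia)). lra. }
  destruct HN as [N HN]. induction N as [|n IH].
  - unfold T_upper in HN. simpl in HN. lra.
  - destruct (Rle_lt_dec alpha (T_upper n)) as [H|H]; [now apply IH|].
    exists (S n). split; [lia|]. split; [|exact HN].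
    rewrite S_INR. replace (INR n + 1 - 1) with (INR n) by ring.
    replace (S n - 1)%nat with n by lia.
    unfold T_upper in H. rewrite Nat.add_1_r in H. exact H.
Qed.

Lemma T_of_spec (alpha : R) : 0 < alpha -> is_T alpha (T_of alpha).
Proof. intros Ha. unfold T_of. apply epsilon_spec, exists_T, Ha. Qed.

Lemma exp_nu_pow_T (alpha : R) :
  0 < alpha -> exp (nu alpha) ^ T_of alpha = INR (T_of alpha) / alpha.
Proof.
  intros Ha. destruct (T_of_spec alpha Ha) as [HT1 _].
  rewrite <- exp_mul_INR. unfold nu.
  assert (0 < INR (T_of alpha)) by (apply lt_0_INR; lia).
  replace (/ INR (T_of alpha) * ln (INR (T_of alpha) / alpha) * INR (T_of alpha))
    with (ln (INR (T_of alpha) / alpha)) by (field; lra).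
  apply exp_ln. apply Rdiv_lt_0_compat; lra.
Qed.

(** * The key inequality  m/alpha <= x^m *)

Section KeyInequality.

Variables (alpha x : R) (T : nat).
Hypotheses (Halpha : 0 < alpha) (Hx : 0 < x) (HT1 : (1 <= T)%nat)
           (HxT : alpha * x ^ T = INR T).

Lemma ratio_above (Hup : alpha <= INR T ^ (T + 1) / (INR T + 1) ^ T) :
  INR T + 1 <= INR T * x.
Proof.
  set (t := INR T) in *.
  assert (Ht : 1 <= t) by (unfold t; apply (le_INR 1); lia).
  destruct (Rle_lt_dec (t + 1) (t * x)) as [h|h]; [exact h|exfalso].
  assert (Hpow : (t * x) ^ T < (t + 1) ^ T) by (apply pow_lt_compat_l; [nra|lia]).
  rewrite Rpow_mult_distr in Hpow. rewrite pow_add, pow_1 in Hup.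
  set (P := (t + 1) ^ T) in *. set (Q := t ^ T) in *.
  assert (0 < P) by (unfold P; apply pow_lt; lra).
  assert (0 < Q) by (unfold Q; apply pow_lt; lra).
  assert (HaP : alpha * P <= Q * t).
  { unfold Rdiv in Hup. assert (P * / P = 1) by (field; lra).
    assert (0 < / P) by (apply Rinv_0_lt_compat; lra). nra. }
  assert (Q * x ^ T * alpha = Q * t) by (rewrite <- HxT; ring).
  nra.
Qed.

Lemma ratio_below (Hlo : (INR T - 1) ^ T / INR T ^ (T - 1) < alpha) :
  (2 <= T)%nat -> (INR T - 1) * x <= INR T.
Proof.
  intros H2T. set (t := INR T) in *.
  assert (Ht2 : 2 <= t) by (unfold t; apply (le_INR 2); lia).
  destruct (Rle_lt_dec ((t - 1) * x) t) as [h|h]; [exact h|exfalso].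
  assert (Hpow : t ^ T < ((t - 1) * x) ^ T) by (apply pow_lt_compat_l; [nra|lia]).
  rewrite Rpow_mult_distr in Hpow.
  assert (HtT : t ^ T = t ^ (T - 1) * t).
  { replace T with (S (T - 1)) at 1 by lia. simpl. ring. }
  rewrite HtT in Hpow.
  set (P := (t - 1) ^ T) in *. set (Q := t ^ (T - 1)) in *.
  assert (0 < Q) by (unfold Q; apply pow_lt; lra).
  assert (0 <= P) by (unfold P; apply pow_le; lra).
  assert (HPa : P < alpha * Q).
  { unfold Rdiv in Hlo. assert (Q * / Q = 1) by (field; lra).
    assert (0 < / Q) by (apply Rinv_0_lt_compat; lra). nra. }
  assert (P * x ^ T * alpha = P * t) by (rewrite <- HxT; ring).
  assert (alpha * (Q * t) < alpha * (P * x ^ T)) by (apply Rmult_lt_compat_l; lra).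
  nra.
Qed.

(* From m = T upwards, alpha x^m - m keeps growing since x >= (T+1)/T >= (m+1)/m. *)
Lemma ratio_bound_from_T : INR T + 1 <= INR T * x ->
  forall m, (T <= m)%nat -> INR m <= alpha * x ^ m.
Proof.
  intros Hstep m Hm. replace m with (T + (m - T))%nat by lia.
  induction (m - T)%nat as [|k IH].
  - rewrite Nat.add_0_r. lra.
  - replace (T + S k)%nat with (S (T + k)) by lia.
    rewrite S_INR. simpl pow.
    set (s := INR (T + k)) in *.
    assert (INR T <= s) by (unfold s; apply le_INR; lia).
    assert (1 <= INR T) by (apply (le_INR 1); lia).
    assert (s * (INR T * x - INR T - 1) >= 0) by nra.
    nra.
Qed.

(* Below m = T, going down one step loses at most a factor x <= (m+1)/m. *)
Lemma ratio_bound_up_to_T : ((2 <= T)%nat -> (INR T - 1) * x <= INR T) ->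
  forall m, (1 <= m <= T)%nat -> INR m <= alpha * x ^ m.
Proof.
  intros Hstep m Hm. replace m with (T - (T - m))%nat by lia.
  assert (Hk : (T - m < T)%nat) by lia.
  induction (T - m)%nat as [|k IH].
  - rewrite Nat.sub_0_r. lra.
  - specialize (IH ltac:(lia)).
    replace (T - k)%nat with (S (T - S k)) in IH by lia.
    rewrite S_INR in IH. simpl pow in IH.
    assert (Hx2 := Hstep ltac:(lia)).
    set (s := INR (T - S k)) in *.
    assert (Hs : s + 1 <= INR T)
      by (unfold s; rewrite <- S_INR; apply le_INR; lia).
    assert (Hs1 : 1 <= s) by (unfold s; apply (le_INR 1); lia).
    assert (0 < x ^ (T - S k)) by (apply pow_lt; lra).
    assert (Hsx : s * x <= s + 1).
    { assert (s * ((INR T - 1) * x) <= s * INR T) by (apply Rmult_le_compat_l; lra).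
      destruct (Rle_lt_dec (s * x) (s + 1)) as [h|h]; [exact h|nra]. }
    nra.
Qed.

End KeyInequality.

Lemma key_ineq (alpha x : R) (T : nat) :
  0 < alpha -> is_T alpha T -> 0 < x -> x ^ T = INR T / alpha ->
  forall m, (1 <= m)%nat -> INR m / alpha <= x ^ m.
Proof.
  intros Ha [HT1 [Hlo Hup]] Hx HxT m Hm.
  assert (HaxT : alpha * x ^ T = INR T) by (rewrite HxT; field; lra).
  assert (Hbound : INR m <= alpha * x ^ m).
  { destruct (Nat.le_gt_cases T m).
    - apply (ratio_bound_from_T alpha x T); auto.
      apply (ratio_above alpha x T); auto.
    - apply (ratio_bound_up_to_T alpha x T); auto.
      + apply (ratio_below alpha x T); auto.
      + lia. }
  unfold Rdiv. apply Rmult_le_reg_l with alpha; [lra|].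
  replace (alpha * (INR m * / alpha)) with (INR m) by (field; lra). lra.
Qed.

Lemma chis_S (a : nat -> R) (alpha : R) (m : nat) :
  chis a alpha (S m) = chis a alpha m ++
    [fold_right Rmax (a (S m))
       (map (fun k => INR (S m - k) / alpha * nth (k - 1) (chis a alpha m) 0) (seq 1 m))].
Proof. reflexivity. Qed.

Lemma chis_length (a : nat -> R) (alpha : R) (n : nat) : length (chis a alpha n) = n.
Proof.
  induction n as [|n IH]; [reflexivity|].
  rewrite chis_S, length_app, IH. simpl. lia.
Qed.

Lemma chis_prefix (a : nat -> R) (alpha : R) (k n : nat) :
  (k <= n)%nat -> exists r, chis a alpha n = chis a alpha k ++ r.
Proof.
  intros H. induction H as [|n H IH].
  - exists []. rewrite app_nil_r. reflexivity.
  - destruct IH as [r Hr]. rewrite chis_S, Hr, <- app_assoc. eexists; reflexivity.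
Qed.

Lemma chi_nth (a : nat -> R) (alpha : R) (k n : nat) :
  (1 <= k <= n)%nat -> nth (k - 1) (chis a alpha n) 0 = chi a alpha k.
Proof.
  intros H. destruct (chis_prefix a alpha k n ltac:(lia)) as [r Hr].
  rewrite Hr, app_nth1; [reflexivity|]. rewrite chis_length. lia.
Qed.

Lemma chi_S (a : nat -> R) (alpha : R) (m : nat) :
  chi a alpha (S m) = fold_right Rmax (a (S m))
       (map (fun k => INR (S m - k) / alpha * chi a alpha k) (seq 1 m)).
Proof.
  unfold chi at 1. rewrite chis_S.
  replace (S m - 1)%nat with m by lia.
  rewrite app_nth2 by (rewrite chis_length; lia).
  rewrite chis_length, Nat.sub_diag. simpl nth.
  f_equal. apply map_ext_in. intros k Hk. apply in_seq in Hk.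
  rewrite chi_nth by lia. reflexivity.
Qed.

Lemma fold_Rmax_ge_base (b : R) (l : list R) : b <= fold_right Rmax b l.
Proof.
  induction l as [|z l IH]; simpl; [lra|].
  eapply Rle_trans; [exact IH|apply Rmax_r].
Qed.

Lemma fold_Rmax_ge_in (b y : R) (l : list R) : In y l -> y <= fold_right Rmax b l.
Proof.
  induction l as [|z l IH]; simpl; [tauto|]. intros [<-|H].
  - apply Rmax_l.
  - eapply Rle_trans; [exact (IH H)|apply Rmax_r].
Qed.

Lemma fold_Rmax_le (b B : R) (l : list R) :
  b <= B -> (forall y, In y l -> y <= B) -> fold_right Rmax b l <= B.
Proof.
  induction l as [|z l IH]; simpl; intros Hb Hl; [exact Hb|].
  apply Rmax_lub; auto.
Qed.

Lemma chi_ge_a (a : nat -> R) (alpha : R) (m : nat) : a (S m) <= chi a alpha (S m).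
Proof. rewrite chi_S. apply fold_Rmax_ge_base. Qed.

Lemma chi_ge_k (a : nat -> R) (alpha : R) (m k : nat) : (1 <= k <= m)%nat ->
  INR (S m - k) / alpha * chi a alpha k <= chi a alpha (S m).
Proof.
  intros Hk. rewrite chi_S. apply fold_Rmax_ge_in. apply in_map_iff.
  exists k. split; [reflexivity|]. apply in_seq. lia.
Qed.

Lemma chi_le (a : nat -> R) (alpha B : R) (m : nat) : a (S m) <= B ->
  (forall k, (1 <= k <= m)%nat -> INR (S m - k) / alpha * chi a alpha k <= B) ->
  chi a alpha (S m) <= B.
Proof.
  intros Ha Hk. rewrite chi_S. apply fold_Rmax_le; [exact Ha|].
  intros y Hy. apply in_map_iff in Hy. destruct Hy as [k [<- Hk']].
  apply in_seq in Hk'. apply Hk. lia.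
Qed.

(** * Comparison of chi with geometric sequences *)

Lemma chi_upper_geometric (a : nat -> R) (alpha x c : R) :
  0 < alpha -> 0 < x -> 0 <= c ->
  (forall m, (1 <= m)%nat -> INR m / alpha <= x ^ m) ->
  (forall n, (1 <= n)%nat -> a n <= c * x ^ n) ->
  forall t, (1 <= t)%nat -> chi a alpha t <= c * x ^ t.
Proof.
  intros Ha Hx Hc Hcoef Hac t.
  induction t as [t IH] using (well_founded_induction lt_wf). intros Ht.
  destruct t as [|m]; [lia|].
  apply chi_le; [apply Hac; lia|]. intros k Hk.
  assert (Hchi := IH k ltac:(lia) ltac:(lia)).
  assert (Hk' := Hcoef (S m - k)%nat ltac:(lia)).
  assert (0 <= INR (S m - k) / alpha) by (apply Rdiv_le_0_compat; [apply pos_INR|lra]).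
  assert (0 < x ^ k) by (apply pow_lt; lra).
  assert (Hsplit : x ^ S m = x ^ (S m - k) * x ^ k) by (rewrite <- pow_add; f_equal; lia).
  rewrite Hsplit.
  apply Rle_trans with (INR (S m - k) / alpha * (c * x ^ k)).
  - apply Rmult_le_compat_l; assumption.
  - replace (c * (x ^ (S m - k) * x ^ k)) with (x ^ (S m - k) * (c * x ^ k)) by ring.
    apply Rmult_le_compat_r; [nra|exact Hk'].
Qed.

(* If x^T = T/alpha, a geometric lower bound on a_1..a_T passes to chi:
   chi_t >= (T/alpha) chi_(t-T) = x^T chi_(t-T) for t > T. *)
Lemma chi_lower_geometric (a : nat -> R) (alpha x c' : R) (T : nat) :
  0 < x -> (1 <= T)%nat -> x ^ T = INR T / alpha ->
  (forall n, (1 <= n <= T)%nat -> c' * x ^ n <= a n) ->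
  forall t, (1 <= t)%nat -> c' * x ^ t <= chi a alpha t.
Proof.
  intros Hx HT1 HxT Hac t.
  induction t as [t IH] using (well_founded_induction lt_wf). intros Ht.
  destruct t as [|m]; [lia|].
  destruct (Nat.le_gt_cases (S m) T) as [h|h].
  - eapply Rle_trans; [apply Hac; lia|apply chi_ge_a].
  - set (k := (S m - T)%nat).
    assert (Hchi := IH k ltac:(unfold k; lia) ltac:(unfold k; lia)).
    assert (Hstep := chi_ge_k a alpha m k ltac:(unfold k; lia)).
    replace (S m - k)%nat with T in Hstep by (unfold k; lia).
    rewrite <- HxT in Hstep.
    assert (0 < x ^ T) by (apply pow_lt; lra).
    assert (Hsplit : x ^ S m = x ^ T * x ^ k)
      by (rewrite <- pow_add; f_equal; unfold k; lia).
    rewrite Hsplit. nra.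
Qed.

(* a_n x^(-n) -> 0 implies a_n <= c x^n for some c >= 0: a tail bound plus finitely many terms. *)
Lemma a_upper_geometric (a : nat -> R) (y : R) :
  is_lim_seq (fun n => a n * exp (- y * INR n)) (Finite 0) ->
  exists c, 0 <= c /\ forall n, a n <= c * exp y ^ n.
Proof.
  intros Hlim. set (x := exp y).
  assert (Hx : 0 < x) by apply exp_pos.
  apply is_lim_seq_spec in Hlim. destruct (Hlim (mkposreal 1 Rlt_0_1)) as [N HN].
  assert (Hhead : exists B, forall n, (n < N)%nat -> a n / x ^ n <= B).
  { clear HN. induction N as [|N [B HB]].
    - exists 0. intros; lia.
    - exists (Rmax B (a N / x ^ N)). intros n Hn.
      destruct (Nat.eq_dec n N) as [->|h]; [apply Rmax_r|].
      eapply Rle_trans; [apply HB; lia|apply Rmax_l]. }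
  destruct Hhead as [B HB].
  exists (Rmax 1 B). split; [eapply Rle_trans; [|apply Rmax_l]; lra|]. intros n.
  assert (Hxn : 0 < x ^ n) by (apply pow_lt; lra).
  assert (Hq : a n / x ^ n <= Rmax 1 B).
  { destruct (Nat.lt_ge_cases n N) as [h|h].
    - eapply Rle_trans; [apply HB, h|apply Rmax_r].
    - specialize (HN n h). simpl in HN.
      rewrite Ropp_mult_distr_l_reverse, exp_Ropp, exp_mul_INR in HN. fold x in HN.
      rewrite Rminus_0_r in HN. apply Rabs_lt_between in HN.
      unfold Rdiv. eapply Rle_trans; [|apply Rmax_l]. lra. }
  unfold Rdiv in Hq.
  apply Rmult_le_compat_r with (r := x ^ n) in Hq; [|lra].
  rewrite Rmult_assoc, Rinv_l in Hq by lra. lra.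
Qed.

Lemma a_lower_geometric (a : nat -> R) (x : R) (N : nat) :
  0 < x -> (forall n, (1 <= n <= N)%nat -> 0 < a n) ->
  exists c', 0 < c' /\ forall n, (1 <= n <= N)%nat -> c' * x ^ n <= a n.
Proof.
  intros Hx Hpos. induction N as [|N IH].
  - exists 1. split; [lra|]. intros; lia.
  - destruct IH as [c [Hc HcN]]; [intros; apply Hpos; lia|].
    assert (HxN : 0 < x ^ S N) by (apply pow_lt; lra).
    assert (HaN : 0 < a (S N)) by (apply Hpos; lia).
    exists (Rmin c (a (S N) / x ^ S N)). split.
    + apply Rmin_glb_lt; [lra|]. apply Rdiv_lt_0_compat; lra.
    + intros n Hn. destruct (Nat.eq_dec n (S N)) as [->|h].
      * apply Rle_trans with (a (S N) / x ^ S N * x ^ S N).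
        -- apply Rmult_le_compat_r; [lra|apply Rmin_r].
        -- right. field. lra.
      * eapply Rle_trans; [|apply HcN; lia].
        apply Rmult_le_compat_r; [apply pow_le; lra|apply Rmin_l].
Qed.

Lemma is_lim_seq_const_plus_div (y b : R) :
  is_lim_seq (fun n => y + b * / INR n) (Finite y).
Proof.
  assert (Hinv : is_lim_seq (fun n => / INR n) 0).
  { apply (is_lim_seq_inv INR p_infty is_lim_seq_INR). discriminate. }
  replace (Finite y) with (Finite (y + b * 0)) by (f_equal; ring).
  apply is_lim_seq_plus'; [apply is_lim_seq_const|].
  apply is_lim_seq_mult'; [apply is_lim_seq_const|exact Hinv].
Qed.

Lemma ln_div_lim_of_exp_bounds (u : nat -> R) (y c' c : R) :
  0 < c' -> c' <= c ->
  (forall n, (1 <= n)%nat -> c' * exp (y * INR n) <= u n <= c * exp (y * INR n)) ->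
  is_lim_seq (fun n => ln (u n) / INR n) (Finite y).
Proof.
  intros Hc' Hc Hbounds.
  apply is_lim_seq_le_le_loc with
    (u := fun n => y + ln c' * / INR n) (w := fun n => y + ln c * / INR n);
    [|apply is_lim_seq_const_plus_div|apply is_lim_seq_const_plus_div].
  exists 1%nat. intros n Hn.
  assert (HnR : 0 < INR n) by (apply lt_0_INR; lia).
  assert (0 < / INR n) by (apply Rinv_0_lt_compat; lra).
  assert (He : 0 < exp (y * INR n)) by apply exp_pos.
  destruct (Hbounds n Hn) as [Hlo Hup].
  assert (0 < c' * exp (y * INR n)) by (apply Rmult_lt_0_compat; lra).
  assert (Llo : ln (c' * exp (y * INR n)) <= ln (u n)) by (apply ln_le; lra).
  assert (Lup : ln (u n) <= ln (c * exp (y * INR n))) by (apply ln_le; lra).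
  rewrite ln_mult, ln_exp in Llo, Lup by lra.
  unfold Rdiv. split.
  - replace (y + ln c' * / INR n) with ((ln c' + y * INR n) * / INR n) by (field; lra).
    apply Rmult_le_compat_r; lra.
  - replace (y + ln c * / INR n) with ((ln c + y * INR n) * / INR n) by (field; lra).
    apply Rmult_le_compat_r; lra.
Qed.

Theorem lemma4 (alpha : R) (a : nat -> R) :
  0 < alpha ->
  (forall n : nat, (1 <= n)%nat -> 0 < a n) ->
  is_lim_seq (fun n : nat => a n * exp (- nu alpha * INR n)) (Finite 0) ->
  (exists c' c : R, 0 < c' /\ c' <= c /\
     forall t : nat, (1 <= t)%nat ->
       c' * exp (nu alpha * INR t) <= chi a alpha t <= c * exp (nu alpha * INR t)) /\
  is_lim_seq (fun t : nat => ln (chi a alpha t) / INR t) (Finite (nu alpha)).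
Proof.
  intros Ha Hpos Hlim.
  set (x := exp (nu alpha)). set (T := T_of alpha).
  assert (Hx : 0 < x) by apply exp_pos.
  assert (HT : is_T alpha T) by apply (T_of_spec alpha Ha).
  assert (HxT : x ^ T = INR T / alpha) by apply (exp_nu_pow_T alpha Ha).
  destruct (a_upper_geometric a (nu alpha) Hlim) as [c [Hc Hac]].
  destruct (a_lower_geometric a x T Hx ltac:(intros; apply Hpos; lia)) as [c' [Hc' Hac']].
  assert (Hup := chi_upper_geometric a alpha x c Ha Hx Hc
                   (key_ineq alpha x T Ha HT Hx HxT) (fun n _ => Hac n)).
  assert (Hlow := chi_lower_geometric a alpha x c' T Hx (proj1 HT) HxT Hac').
  assert (Hbounds : forall t, (1 <= t)%nat ->
            c' * exp (nu alpha * INR t) <= chi a alpha t <= c * exp (nu alpha * INR t)).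
  { intros t Ht. rewrite exp_mul_INR. fold x. split; auto. }
  assert (Hc'c : c' <= c).
  { destruct (Hbounds 1%nat ltac:(lia)) as [H1 H2].
    assert (0 < exp (nu alpha * INR 1)) by apply exp_pos. nra. }
  split.
  - exists c', c. auto.
  - exact (ln_div_lim_of_exp_bounds _ _ _ _ Hc' Hc'c Hbounds).
Qed.
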